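(* Consider the covariate-adaptive randomization design described in the context with $I=2$ covariates, each having 2 levels (so $2\times 2=4$ strata). Let the weights $w_{o}, w_{m,1}, w_{m,2}, w_{s}$ be nonnegative with $w_{o}+w_{m,1}+w_{m,2}+w_{s}=1$. Suppose the following two conditions hold: (A) $w_{s}>0$; (B) define $u_{1}=w_{o}+w_{m,1}+w_{m,2}+w_{s}=1$, $u_{2}=w_{o}+w_{m,1}$, $u_{3}=w_{o}+w_{m,2}$, $u_{4}=w_{o}$; the solution $\mathbf{x}=(x_{1},x_{2},x_{3})$ of the linear system \[ \begin{pmatrix} u_{1} & u_{2} & u_{3}\\ u_{2} & u_{1} & u_{4}\\ u_{3} & u_{4} & u_{1}\end{pmatrix} \begin{pmatrix} x_{1}\\ x_{2}\\ x_{3}\end{pmatrix} =\begin{pmatrix} u_{4}\\ u_{3}\\ u_{2}\end{pmatrix} \] satisfies $|x_{1}|+|x_{2}|+|x_{3}|<1$. Then $(\mathbf{D}_{n})_{n\geq1}$ is a positive recurrent Markov chain with period 2 on $\mathbb{Z}^{4}$.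
   Context: Two treatments (1 and 2) are compared; patients arrive sequentially. There are $I$ covariates, covariate $i$ having $m_i$ levels; a stratum is a covariate profile $(k_1,\ldots,k_I)$ and a margin $(i;k_i)$ is the set of patients whose $i$th covariate is at level $k_i$. The covariate profiles $Z_1,Z_2,\ldots$ are i.i.d. multinomial over the strata. After $n-1$ patients, $D_{n-1}$, $D_{n-1}(i;k_i)$ and $D_{n-1}(k_1,\ldots,k_I)$ denote (number in treatment 1) minus (number in treatment 2) overall, on margin $(i;k_i)$, and within stratum $(k_1,\ldots,k_I)$. If the $n$th patient falls in stratum $(k_1^*,\ldots,k_I^* )$, let $\mathit{Imb}_n^{(1)}=w_o[D_{n-1}+1]^2+\sum_{i=1}^I w_{m,i}[D_{n-1}(i;k_i^* )+1]^2+w_s[D_{n-1}(k_1^*,\ldots,k_I^* )+1]^2$ be the weighted imbalance if the patient is assigned to treatment 1, and $\mathit{Imb}_n^{(2)}$ the analogous quantity with $-1$ in place of $+1$. The first patient is assigned to treatment 1 with probability $1/2$; for $n>1$, the $n$th patient is assigned to treatment 1 with probability $q$ if $\mathit{Imb}_n^{(1)}>\mathit{Imb}_n^{(2)}$, $p$ if $\mathit{Imb}_n^{(1)}<\mathit{Imb}_n^{(2)}$, and $1/2$ otherwise, where $0<q<p<1$, $p+q=1$. $\mathbf{D}_n=[D_n(k_1,\ldots,k_I)]$ is the array of within-stratum differences after $n$ patients; $(\mathbf{D}_n)_{n\ge1}$ is a Markov chain on $\mathbb{Z}^m$, $m=\prod_i m_i$. *)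

From HB Require Import structures.
From mathcomp Require Import all_boot all_order all_algebra.
From mathcomp Require Import all_classical all_reals.
From mathcomp Require Import topology normedtype sequences.
Set Implicit Arguments. Unset Strict Implicit. Unset Printing Implicit Defensive.
Import Order.TTheory GRing.Theory Num.Theory.
Import numFieldNormedType.Exports.
Local Open Scope classical_set_scope.
Local Open Scope ring_scope.

(* Two covariates with two levels each: a stratum is a pair (k1,k2). *)
Definition stratum := ('I_2 * 'I_2)%type.

(* The state D_n : within-stratum differences (#trt1 - #trt2), an element of Z^4. *)
Definition state := {ffun stratum -> int}.

Definition Dtot (D : state) : int := \sum_(s : stratum) D s.
Definition Dmarg1 (D : state) (k : 'I_2) : int := \sum_(j < 2) D (k, j).
Definition Dmarg2 (D : state) (k : 'I_2) : int := \sum_(i < 2) D (i, k).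

Section Design.
Variable R : realType.
Variables (wo wm1 wm2 ws p : R) (pi : stratum -> R).

(* weighted imbalance if the new patient (in stratum s) gets +t (t = 1: trt 1, t = -1: trt 2) *)
Definition Imb (D : state) (s : stratum) (t : int) : R :=
  wo * ((Dtot D + t)%:~R) ^+ 2
  + wm1 * ((Dmarg1 D s.1 + t)%:~R) ^+ 2
  + wm2 * ((Dmarg2 D s.2 + t)%:~R) ^+ 2
  + ws * ((D s + t)%:~R) ^+ 2.

Definition prob1 (D : state) (s : stratum) : R :=
  if Imb D s 1 > Imb D s (-1) then 1 - p
  else if Imb D s 1 < Imb D s (-1) then p
  else 1 / 2.

Definition step (s : stratum) (t : int) (D : state) : state :=
  [ffun s' => if s' == s then D s' + t else D s'].

Definition trans (x y : state) : R :=
  \sum_(s : stratum)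
     pi s * (prob1 x s * (y == step s 1 x)%:R
             + (1 - prob1 x s) * (y == step s (-1) x)%:R).

(* the (finitely many, pairwise distinct) possible successors of x;
   trans x y = 0 for y outside this list *)
Definition succs (x : state) : seq state :=
  [seq step st.1 st.2 x | st <- [seq ((s : stratum), t) | s <- enum [set: stratum], t <- [:: (1:int); -1]]].

Fixpoint Pn (n : nat) (x y : state) : R :=
  match n with
  | 0 => (x == y)%:R
  | n'.+1 => \sum_(z <- succs x) trans x z * Pn n' z y
  end.

(* first-passage probabilities: F n x y = P_x(first visit to y at time n), n >= 1 *)
Fixpoint Fn (n : nat) (x y : state) : R :=
  match n with
  | 0 => 0
  | 1 => trans x y
  | n'.+1 => \sum_(z <- succs x | z != y) trans x z * Fn n' z y
  end.

Definition irreducible : Prop :=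
  forall x y : state, exists n, 0 < Pn n x y.

Definition recurrent (x : state) : Prop :=
  series (fun n => Fn n x x) @ \oo --> (1 : R).

Definition positive_recurrent (x : state) : Prop :=
  recurrent x /\ cvg (series (fun n => n%:R * Fn n x x) @ \oo).

Definition has_period (d : nat) (x : state) : Prop :=
  (forall n, (0 < n)%N -> 0 < Pn n x x -> (d %| n)%N) /\
  (forall d', (forall n, (0 < n)%N -> 0 < Pn n x x -> (d' %| n)%N) -> (d' %| d)%N).

Definition pos_rec_chain_period (d : nat) : Prop :=
  irreducible /\ (forall x, positive_recurrent x) /\ (forall x, has_period d x).

End Design.

From HB Require Import structures.
From mathcomp Require Import all_boot all_order all_algebra.
From mathcomp Require Import all_classical all_reals.
From mathcomp Require Import topology normedtype sequences.
From mathcomp Require Import ring lra zify.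
Import Order.TTheory GRing.Theory Num.Theory.
Import numFieldNormedType.Exports.
Local Open Scope classical_set_scope.
Local Open Scope ring_scope.

(* The chain moves by +-1 in a single coordinate at each step.  Hence the overall
   difference changes parity at every step, which gives period 2, and every state
   can walk coordinatewise to every other one, which gives irreducibility.

   For positive recurrence consider the energy
     Q = wo D^2 + wm1 sum_k D(1;k)^2 + wm2 sum_k D(2;k)^2 + ws sum_s D(s)^2.
   Assigning treatment +-1 to a patient of stratum s changes Q by exactly
   Imb(+-1) - Imb(0) = 1 +- 2 L_s, where L_s is the slope of the imbalance, and the
   biased coin favours the sign of -L_s; so E[dQ] = 1 - 2(2p-1) sum_s pi_s |L_s|.
   Since Q = sum_s D(s) L_s >= ws sum_s D(s)^2, condition (A) forces sum_s |L_s| to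
   grow linearly in |D|, and the drift of Q is <= -1 off a finite set.  On that set
   a second term B (1 - theta^dist(., y)) takes over: the chain steps towards y with
   probability at least 2 theta, so theta^dist at least doubles in expectation.
   The sum has drift <= -1 everywhere but at y, which bounds the expected return
   time to y. *)

Lemma stepE s t z s' : step s t z s' = z s' + (if s' == s then t else 0).
Proof. by rewrite ffunE; case: ifP; rewrite ?addr0. Qed.

Lemma step_inj s s' (t t' : int) z : t != 0 -> t' != 0 ->
  (step s t z == step s' t' z) = (s == s') && (t == t').
Proof.
move=> t0 t'0; apply/eqP/andP => [/(congr1 (fun f : state => f s))|[/eqP <- /eqP <-]] //.
rewrite !stepE eqxx; case: eqVneq => [-> /addrI ->|_ /addrI/eqP] //.
by rewrite (negbTE t0).
Qed.

Lemma step_stepN s t z : step s (- t) (step s t z) = z.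
Proof. by apply/ffunP => s'; rewrite !stepE; case: ifP; rewrite ?addr0 ?addrK. Qed.

Lemma Dtot_step s t z : Dtot (step s t z) = Dtot z + t.
Proof.
rewrite /Dtot (bigD1 s) //= [in RHS](bigD1 s) //= stepE eqxx addrAC.
by congr (_ + _ + _); apply: eq_bigr => s' /negbTE ns; rewrite stepE ns addr0.
Qed.

Lemma stratum_cases (P : stratum -> Prop) :
  P (ord0, ord0) -> P (ord0, ord_max) -> P (ord_max, ord0) -> P (ord_max, ord_max) ->
  forall s, P s.
Proof.
have ord2P (i : 'I_2) : i = ord0 \/ i = ord_max.
  by case: i => [[|[|//]] ?]; [left|right]; apply: val_inj.
move=> P00 P01 P10 P11 [i j].
by case: (ord2P i) => ->; case: (ord2P j) => ->.
Qed.

Lemma sum_ord2 (V : nmodType) (G : 'I_2 -> V) : \sum_(k < 2) G k = G ord0 + G ord_max.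
Proof. by rewrite !big_ord_recl big_ord0 addr0; congr (_ + G _); apply: val_inj. Qed.

Lemma sum_stratum (V : nmodType) (G : stratum -> V) :
  \sum_s G s = G (ord0, ord0) + G (ord0, ord_max) + G (ord_max, ord0) + G (ord_max, ord_max).
Proof.
transitivity (\sum_(i < 2) \sum_(j < 2) G (i, j)); last by rewrite !sum_ord2 addrA.
by rewrite pair_big; apply: eq_bigr => -[].
Qed.

Definition l1dist (z y : state) : nat := (\sum_s absz (z s - y s)%R)%N.

Lemma l1dist_eq0 z y : (l1dist z y == 0)%N = (z == y).
Proof.
rewrite /l1dist sum_nat_eq0; apply/forallP/eqP => [H|-> s]; last by rewrite subrr.
by apply/ffunP => s; apply/eqP; rewrite -subr_eq0 -absz_eq0; apply: (implyP (H s)).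
Qed.

Lemma l1dist_step z y : z != y -> exists s, exists2 t : int,
  (t == 1) || (t == -1) & (l1dist (step s t z) y).+1 = l1dist z y.
Proof.
move=> nzy; have [s ns] : exists s, z s != y s.
  by apply/existsP; apply: contraNT nzy => /existsPn H; apply/eqP/ffunP => s; apply/eqP/negPn.
set r := (\sum_(s' | s' != s) absz (z s' - y s')%R)%N.
have Ht t : l1dist (step s t z) y = (absz (z s + t - y s)%R + r)%N.
  rewrite /l1dist (bigD1 s) //= stepE eqxx; congr (_ + _)%N.
  by apply: eq_bigr => s' /negbTE ns'; rewrite stepE ns' addr0.
have -> : l1dist z y = (absz (z s - y s)%R + r)%N by rewrite /l1dist (bigD1 s).
exists s; rewrite neq_lt in ns; have [lt_zy|lt_yz] := orP ns.
  by exists 1 => //; rewrite Ht; lia.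
by exists (-1) => //; rewrite Ht; lia.
Qed.

Lemma l1dist_le {R : numDomainType} z y :
  (l1dist z y)%:R <= \sum_s `|(z s)%:~R : R| + \sum_s `|(y s)%:~R : R|.
Proof.
rewrite /l1dist natr_sum -big_split /=; apply: ler_sum => s _.
by rewrite natr_absz intr_norm rmorphB /= ler_normB.
Qed.

Lemma sum_mul_le_sum_norm {R : realDomainType} (I : finType) (a b : I -> R) :
  \sum_i a i * b i <= (\sum_i `|a i|) * \sum_i `|b i|.
Proof.
rewrite mulr_sumr; apply: ler_sum => i _; apply: le_trans (ler_norm _) _.
rewrite normrM ler_wpM2r // (bigD1 i) //= lerDl.
by apply: sumr_ge0 => *.
Qed.

Lemma sqr_sum_norm_le {R : realDomainType} (a : stratum -> R) :
  (\sum_s `|a s|) ^+ 2 <= 4 * \sum_s a s ^+ 2.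
Proof.
rewrite !sum_stratum -!(real_normK (num_real (a _))).
move: `|a (ord0, ord0)| `|a (ord0, ord_max)| `|a (ord_max, ord0)| => a1 a2 a3.
move: `|a (ord_max, ord_max)| => a4.
have := sqr_ge0 (a1 - a2); have := sqr_ge0 (a1 - a3); have := sqr_ge0 (a1 - a4).
have := sqr_ge0 (a2 - a3); have := sqr_ge0 (a2 - a4); have := sqr_ge0 (a3 - a4).
nra.
Qed.

Section Chain.
Variables (R : realType) (wo wm1 wm2 ws p : R) (pi : stratum -> R).

Local Notation prob := (prob1 wo wm1 wm2 ws p).
Local Notation P := (trans wo wm1 wm2 ws p pi).
Local Notation Pn := (Pn wo wm1 wm2 ws p pi).

Definition expect1 (z : state) (F : state -> R) : R := \sum_(w <- succs z) P z w * F w.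

Lemma sum_succs z (G : state -> R) :
  \sum_(w <- succs z) G w = \sum_s (G (step s 1 z) + G (step s (-1) z)).
Proof.
rewrite /succs big_map big_allpairs big_enum /=.
rewrite (eq_bigl xpredT) => [|s]; last by rewrite in_setT.
by apply: eq_bigr => s _; rewrite !big_cons big_nil addr0.
Qed.

Lemma trans_step_up z s : P z (step s 1 z) = pi s * prob z s.
Proof.
rewrite /trans (bigD1 s) //= big1 => [|s' ns'].
  by rewrite !step_inj // !eqxx /= mulr1 mulr0 !addr0.
by rewrite !step_inj // eq_sym (negbTE ns') !mulr0 addr0 mulr0.
Qed.

Lemma trans_step_down z s : P z (step s (-1) z) = pi s * (1 - prob z s).
Proof.
rewrite /trans (bigD1 s) //= big1 => [|s' ns'].
  by rewrite !step_inj // !eqxx /= mulr1 mulr0 add0r addr0.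
by rewrite !step_inj // eq_sym (negbTE ns') !mulr0 addr0 mulr0.
Qed.

Definition expect1_at z F s : R :=
  pi s * prob z s * F (step s 1 z) + pi s * (1 - prob z s) * F (step s (-1) z).

Lemma expect1E z F : expect1 z F = \sum_s expect1_at z F s.
Proof.
by rewrite /expect1 sum_succs; apply: eq_bigr => s _; rewrite trans_step_up trans_step_down.
Qed.

Lemma trans_expect1 z y : P z y = expect1 z (fun w => (w == y)%:R).
Proof.
by rewrite expect1E /trans; apply: eq_bigr => s _; rewrite mulrDr !mulrA ![y == _]eq_sym.
Qed.

Lemma expect1D z F G : expect1 z (fun w => F w + G w) = expect1 z F + expect1 z G.
Proof. by rewrite /expect1 -big_split; apply: eq_bigr => w _; rewrite mulrDr. Qed.

Lemma expect1B z F G : expect1 z (fun w => F w - G w) = expect1 z F - expect1 z G.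
Proof. by rewrite /expect1 -sumrB; apply: eq_bigr => w _; rewrite mulrBr. Qed.

Lemma expect1Z z c F : expect1 z (fun w => c * F w) = c * expect1 z F.
Proof. by rewrite /expect1 mulr_sumr; apply: eq_bigr => w _; rewrite mulrCA. Qed.

Lemma expect1_sum z n (F : nat -> state -> R) :
  expect1 z (fun w => \sum_(k < n) F k w) = \sum_(k < n) expect1 z (F k).
Proof. by rewrite /expect1 exchange_big; apply: eq_bigr => w _; rewrite mulr_sumr. Qed.

Lemma PnS n x y : Pn n.+1 x y = expect1 x (Pn n ^~ y).
Proof. by []. Qed.

Hypotheses (q_gt0 : 0 < 1 - p) (q_lt_p : 1 - p < p).
Hypothesis pi_gt0 : forall s, 0 < pi s.

Lemma prob1_ge z s : 1 - p <= prob z s.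
Proof. by move: q_lt_p; rewrite /prob1; do 2?case: ifP => _; lra. Qed.

Lemma prob1_le z s : prob z s <= p.
Proof. by move: q_lt_p; rewrite /prob1; do 2?case: ifP => _; lra. Qed.

Lemma expect1_at_ge0 z F s : (forall w, 0 <= F w) -> 0 <= expect1_at z F s.
Proof.
move=> F0; have := prob1_ge z s; have := prob1_le z s; have := q_gt0 => q0 le_p ge_q.
have [prob0 probN0] : 0 <= prob z s /\ 0 <= 1 - prob z s by split; lra.
by rewrite addr_ge0 // !mulr_ge0 // ltW.
Qed.

Lemma expect1_ge0 z F : (forall w, 0 <= F w) -> 0 <= expect1 z F.
Proof. by move=> F0; rewrite expect1E sumr_ge0 // => s _; apply: expect1_at_ge0. Qed.

Lemma expect1_le z F G : (forall w, F w <= G w) -> expect1 z F <= expect1 z G.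
Proof. by move=> FG; rewrite -subr_ge0 -expect1B expect1_ge0 // => w; rewrite subr_ge0. Qed.

Lemma expect1_ge_at z F s : (forall w, 0 <= F w) -> expect1_at z F s <= expect1 z F.
Proof.
move=> F0; rewrite expect1E (bigD1 s) //= lerDl.
by apply: sumr_ge0 => i _; apply: expect1_at_ge0.
Qed.

Lemma expect1_ge_step z F s t : (t == 1) || (t == -1) -> (forall w, 0 <= F w) ->
  pi s * (1 - p) * F (step s t z) <= expect1 z F.
Proof.
move=> t1 F0; apply: le_trans _ (expect1_ge_at z F s F0); rewrite /expect1_at.
have := prob1_ge z s; have := prob1_le z s; have := q_gt0 => q0 le_p ge_q.
have pis0 := ltW (pi_gt0 s).
case/orP: t1 => /eqP ->.
- rewrite -[leLHS]addr0 lerD // ?ler_wpM2r // ?ler_wpM2l //.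
  by rewrite !mulr_ge0 // subr_ge0; lra.
- rewrite -[leLHS]add0r lerD // ?ler_wpM2r // ?ler_wpM2l ?lerD2l ?lerN2 //.
  by rewrite !mulr_ge0 //; lra.
Qed.

Lemma Pn_ge0 n x y : 0 <= Pn n x y.
Proof. by elim: n x => [|n IH] x; rewrite ?ler0n // PnS expect1_ge0. Qed.

Hypothesis pi_sum1 : \sum_s pi s = 1.

Lemma expect1_cst z c : expect1 z (fun=> c) = c.
Proof.
rewrite expect1E -[RHS]mul1r -pi_sum1 mulr_suml.
by apply: eq_bigr => s _; rewrite /expect1_at; ring.
Qed.

Local Notation Fn := (Fn wo wm1 wm2 ws p pi).

(* [avoid y n z]: probability that the chain started at [z] does not visit [y]
   at any of the times [1, ..., n]. *)
Fixpoint avoid (y : state) (n : nat) (z : state) : R :=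
  if n is n'.+1 then expect1 z (fun w => (w != y)%:R * avoid y n' w) else 1.

Lemma avoidS y n z :
  avoid y n.+1 z = expect1 z (fun w => (w != y)%:R * avoid y n w).
Proof. by []. Qed.

Lemma Fn_avoid y n z : Fn n.+1 z y = avoid y n z - avoid y n.+1 z.
Proof.
elim: n z => [|n IH] z.
  rewrite /= trans_expect1 -[X in X - _](expect1_cst z) -expect1B.
  by congr expect1; apply: funext => w; case: (w == y); rewrite ?mulr1 ?subrr ?subr0.
rewrite -[LHS]/(\sum_(w <- succs z | w != y) P z w * Fn n.+1 w y).
rewrite big_mkcond !avoidS -expect1B /expect1; apply: eq_bigr => w _.
by case: (w != y); rewrite ?mulr1n ?mulr0n ?mul1r ?mul0r ?subrr ?mulr0 // IH.
Qed.

Lemma avoid_ge0 y n z : 0 <= avoid y n z.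
Proof. by elim: n z => [|n IH] z //=; rewrite expect1_ge0 // => w; rewrite mulr_ge0. Qed.

Lemma avoidS_le y n z : avoid y n.+1 z <= avoid y n z.
Proof.
elim: n z => [|n IH] z /=.
  rewrite -[leRHS](expect1_cst z); apply: expect1_le => w.
  by case: (w != y); rewrite ?mulr1n ?mulr0n ?mulr1 ?mul0r.
by apply: expect1_le => w; apply: ler_wpM2l => //; apply: IH.
Qed.

Lemma avoid_le y m n z : (m <= n)%N -> avoid y n z <= avoid y m z.
Proof.
move=> /subnK <-; elim: (n - m)%N => [|k IH]; first by rewrite add0n.
exact: le_trans (avoidS_le y _ z) IH.
Qed.

Lemma Fn_ge0 y n z : 0 <= Fn n z y.
Proof. by case: n => [|n]; rewrite ?Fn_avoid ?subr_ge0 ?avoidS_le. Qed.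

Lemma series_Fn y n : series (fun k => Fn k y y) n.+1 = 1 - avoid y n y.
Proof.
elim: n => [|n IH]; first by rewrite seriesSr /series /= big_geq // add0r subrr.
by rewrite seriesSr IH Fn_avoid; ring.
Qed.

Lemma series_nFn y n : series (fun k => k%:R * Fn k y y) n.+1 =
  \sum_(k < n) avoid y k y - n%:R * avoid y n y.
Proof.
elim: n => [|n IH].
  by rewrite seriesSr /series /= big_geq // big_ord0 !mul0r subrr addr0.
by rewrite seriesSr IH Fn_avoid big_ord_recr /= -natr1; ring.
Qed.

Section Lyapunov.
Variables (y : state) (V : state -> R).
Hypothesis V_ge0 : forall w, 0 <= V w.
Hypothesis V_drift : forall z, z != y -> 1 + expect1 z V <= V z.

Lemma sum_avoidS n z : \sum_(k < n.+1) avoid y k z =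
  1 + expect1 z (fun w => (w != y)%:R * \sum_(k < n) avoid y k w).
Proof.
rewrite big_ord_recl /=; congr (_ + _).
rewrite -(expect1_sum z n (fun k w => (w != y)%:R * avoid y k w)).
by congr expect1; apply: funext => w; rewrite mulr_sumr.
Qed.

(* [\sum_(k < n) avoid y k z] is the expected number of steps, capped at [n],
   to reach [y] from [z]. *)
Lemma sum_avoid_le_V n z : z != y -> \sum_(k < n) avoid y k z <= V z.
Proof.
elim: n z => [|n IH] z nzy; first by rewrite big_ord0.
rewrite sum_avoidS; apply: le_trans _ (V_drift _ nzy); rewrite lerD2l.
by apply: expect1_le => w; case: eqVneq => [_|/IH]; rewrite ?mul0r ?mul1r.
Qed.

Lemma sum_avoid_le n : \sum_(k < n) avoid y k y <= 1 + expect1 y V.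
Proof.
case: n => [|n]; first by rewrite big_ord0 addr_ge0 ?expect1_ge0.
rewrite sum_avoidS lerD2l; apply: expect1_le => w.
by case: eqVneq => [_|/sum_avoid_le_V]; rewrite ?mul0r ?mul1r.
Qed.

Lemma mul_avoid_le n : n%:R * avoid y n y <= 1 + expect1 y V.
Proof.
apply: le_trans _ (sum_avoid_le n).
have : \sum_(k < n) avoid y n y <= \sum_(k < n) avoid y k y.
  by apply: ler_sum => k _; apply/avoid_le/ltnW.
by rewrite sumr_const card_ord mulr_natl.
Qed.

Lemma avoid_cvg0 : avoid y n y @[n --> \oo] --> 0.
Proof.
rewrite -cvg_shiftS; apply: (@squeeze_cvgr _ _ _ _ (fun=> 0)
  (fun n => (1 + expect1 y V) * harmonic n)); last 2 first.
- exact: cvg_cst.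
- by rewrite -(mulr0 (1 + expect1 y V)); apply: cvgM; [exact: cvg_cst | exact: cvg_harmonic].
apply: nearW => n /=; rewrite -avoidS avoid_ge0 ler_pdivlMr ?ltr0n //.
by rewrite mulrC mul_avoid_le.
Qed.

Lemma recurrent_of_drift : recurrent wo wm1 wm2 ws p pi y.
Proof.
rewrite /recurrent -cvg_shiftS.
have -> : [sequence series (fun k => Fn k y y) n.+1]_n = (fun n => 1 - avoid y n y).
  by apply: funext => n; rewrite /= series_Fn.
by have := cvgB (cvg_cst (1 : R)) avoid_cvg0; rewrite subr0; apply.
Qed.

Lemma positive_recurrent_of_drift : positive_recurrent wo wm1 wm2 ws p pi y.
Proof.
split; first exact: recurrent_of_drift.
apply: nondecreasing_is_cvgn.
  apply: nondecreasing_series => k _ _ /=.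
  by rewrite mulr_ge0 ?Fn_ge0.
exists (1 + expect1 y V) => _ [[|n] _ <-].
  by rewrite /series /= big_geq // addr_ge0 ?expect1_ge0.
rewrite /= series_nFn; apply: le_trans _ (sum_avoid_le n).
by rewrite lerBlDr lerDl mulr_ge0 ?avoid_ge0.
Qed.

End Lyapunov.

Lemma Pn_step_gt0 n x y s t : (t == 1) || (t == -1) ->
  0 < Pn n (step s t x) y -> 0 < Pn n.+1 x y.
Proof.
move=> t1 Pn_gt0; rewrite PnS.
apply: lt_le_trans _ (expect1_ge_step x _ s t t1 (fun w => Pn_ge0 n w y)).
by rewrite !mulr_gt0.
Qed.

Lemma irreducible_chain : irreducible wo wm1 wm2 ws p pi.
Proof.
move=> x y; elim: {x}(l1dist x y) {-2}x (erefl (l1dist x y)) => [|k IH] x dxy.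
  by exists 0%N; move/eqP: dxy; rewrite l1dist_eq0 => /eqP ->; rewrite /= eqxx ltr01.
have /l1dist_step [s [t t1 dS]] : x != y by rewrite -l1dist_eq0 dxy.
have [n Pn_gt0] := IH _ (congr1 predn (etrans dS dxy)).
by exists n.+1; apply: Pn_step_gt0 Pn_gt0.
Qed.

(* Every step changes [Dtot] by one. *)
Lemma Pn_parity n x y : Pn n x y != 0 -> exists k : int, n%:Z + Dtot x - Dtot y = 2 * k.
Proof.
elim: n x => [|n IH] x.
  by rewrite /=; case: (eqVneq x y) => [->|_]; [exists 0; rewrite addrK mulr0 | rewrite eqxx].
have [[s [/IH [k hk] | /IH [k hk]]] | Hno] := pselect (exists s,
    Pn n (step s 1 x) y != 0 \/ Pn n (step s (-1) x) y != 0).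
- by exists k; rewrite -hk Dtot_step -addn1 PoszD; ring.
- by exists (k + 1); rewrite mulrDr -hk Dtot_step -addn1 PoszD; ring.
rewrite PnS expect1E big1 ?eqxx // => s _; rewrite /expect1_at /=.
have [-> ->] : Pn n (step s 1 x) y = 0 /\ Pn n (step s (-1) x) y = 0.
  by split; apply/eqP; apply: contraT => Pn_neq0; case: Hno; exists s; [left|right].
by rewrite !mulr0 addr0.
Qed.

Lemma period2_chain x : has_period wo wm1 wm2 ws p pi 2 x.
Proof.
split=> [n n_gt0 /lt0r_neq0 /Pn_parity [k]|d d_dvd]; first by rewrite addrK; lia.
apply: d_dvd => //; apply: (@Pn_step_gt0 _ _ _ (ord0, ord0) 1) => //.
apply: (@Pn_step_gt0 _ _ _ (ord0, ord0) (-1)) => //.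
by rewrite step_stepN /= eqxx ltr01.
Qed.

Local Notation imb := (Imb wo wm1 wm2 ws).

Hypotheses (wo_ge0 : 0 <= wo) (wm1_ge0 : 0 <= wm1) (wm2_ge0 : 0 <= wm2).
Hypotheses (ws_gt0 : 0 < ws) (w_sum1 : wo + wm1 + wm2 + ws = 1).

(* Half the difference [imb z s 1 - imb z s (-1)]: the rule favours
   treatment 1 in stratum [s] exactly when it is negative. *)
Definition imb_slope (z : state) (s : stratum) : R :=
  wo * (Dtot z)%:~R + wm1 * (Dmarg1 z s.1)%:~R + wm2 * (Dmarg2 z s.2)%:~R + ws * (z s)%:~R.

Definition imb_energy (z : state) : R :=
  wo * (Dtot z)%:~R ^+ 2 + wm1 * \sum_(k < 2) (Dmarg1 z k)%:~R ^+ 2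
  + wm2 * \sum_(k < 2) (Dmarg2 z k)%:~R ^+ 2 + ws * \sum_s (z s)%:~R ^+ 2.

Lemma Imb_expand z s t : imb z s t = imb z s 0 + 2 * t%:~R * imb_slope z s + t%:~R ^+ 2.
Proof.
suff -> : imb z s t = imb z s 0 + 2 * t%:~R * imb_slope z s
  + (wo + wm1 + wm2 + ws) * t%:~R ^+ 2 by rewrite w_sum1 mul1r.
rewrite /Imb /imb_slope !intrD !addr0.
move: (Dtot z)%:~R (Dmarg1 z s.1)%:~R (Dmarg2 z s.2)%:~R (z s)%:~R t%:~R => a b c d e.
ring.
Qed.

Lemma imb_energy_step s t z : imb_energy (step s t z) = imb_energy z + (imb z s t - imb z s 0).
Proof.
rewrite /imb_energy /Imb /Dtot /Dmarg1 /Dmarg2 !sum_ord2 !sum_stratum !stepE.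
move: s; apply: stratum_cases; rewrite /= !intrD !mulr0z !addr0.
all: move: (z (ord0, ord0))%:~R (z (ord0, ord_max))%:~R (t%:~R) => a b e.
all: by move: (z (ord_max, ord0))%:~R (z (ord_max, ord_max))%:~R => c d; ring.
Qed.

Lemma imb_energyE z : imb_energy z = \sum_s (z s)%:~R * imb_slope z s.
Proof.
rewrite /imb_energy /imb_slope /Dtot /Dmarg1 /Dmarg2.
rewrite !sum_ord2 !sum_stratum /= !sum_ord2 !intrD.
move: (z (ord0, ord0))%:~R (z (ord0, ord_max))%:~R => a b.
by move: (z (ord_max, ord0))%:~R (z (ord_max, ord_max))%:~R => c d; ring.
Qed.

Lemma imb_energy_ge (z : state) : ws * \sum_s (z s)%:~R ^+ 2 <= imb_energy z.
Proof.
rewrite /imb_energy lerDr !addr_ge0 //; apply: mulr_ge0 => //.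
all: by [exact: sqr_ge0 | apply: sumr_ge0 => *; exact: sqr_ge0].
Qed.

Lemma imb_energy_ge0 z : 0 <= imb_energy z.
Proof.
apply: le_trans (imb_energy_ge z); apply: mulr_ge0; first exact: ltW.
by apply: sumr_ge0 => *; exact: sqr_ge0.
Qed.

(* In stratum [s] the energy rises by [1 + 2 |imb_slope|] when the unfavoured
   treatment is given and by [1 - 2 |imb_slope|] otherwise. *)
Lemma expect1_at_energy z s : expect1_at z imb_energy s =
  pi s * (imb_energy z + 1 - 2 * (2 * p - 1) * `|imb_slope z s|).
Proof.
rewrite /expect1_at !imb_energy_step /prob1 (Imb_expand z s 1) (Imb_expand z s (-1)).
rewrite !intrN !mulr1z.
move: (imb z s 0) (imb_slope z s) (imb_energy z) => I0 L Q.
case: ifP => [L_gt0|/negbT]; first by rewrite gtr0_norm; [ring | lra].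
rewrite -leNgt => L_le0; case: ifP => [L_lt0|/negbT]; first by rewrite ltr0_norm; [ring | lra].
rewrite -leNgt => L_ge0; have -> : L = 0 by lra.
by rewrite normr0; ring.
Qed.

Definition pi_min : R := pi [arg min_(s < (ord0, ord0)) pi s]%O.

Lemma pi_min_le s : pi_min <= pi s.
Proof. by rewrite /pi_min; case: arg_minP => // s0 _; apply. Qed.

Lemma pi_min_gt0 : 0 < pi_min.
Proof. exact: pi_gt0. Qed.

Lemma pi_min_le1 : pi_min <= 1.
Proof.
apply: le_trans (pi_min_le (ord0, ord0)) _; rewrite -pi_sum1 (bigD1 (ord0, ord0)) //= lerDl.
by apply: sumr_ge0 => s _; apply/ltW.
Qed.

Definition drift_rate : R := 2 * (2 * p - 1) * pi_min.

Lemma drift_rate_gt0 : 0 < drift_rate.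
Proof. by rewrite !mulr_gt0 ?pi_min_gt0 // subr_gt0; move: q_lt_p; lra. Qed.

Lemma expect1_energy_le z :
  expect1 z imb_energy <= imb_energy z + 1 - drift_rate * \sum_s `|imb_slope z s|.
Proof.
have slope_ge0 s : 0 <= 2 * (2 * p - 1) * `|imb_slope z s|.
  by rewrite !mulr_ge0 // subr_ge0; move: q_lt_p; lra.
have -> : imb_energy z + 1 - drift_rate * \sum_s `|imb_slope z s| =
    \sum_s (pi s * (imb_energy z + 1) - pi_min * (2 * (2 * p - 1) * `|imb_slope z s|)).
  by rewrite sumrB -mulr_suml pi_sum1 mul1r -!mulr_sumr /drift_rate; ring.
rewrite expect1E; apply: ler_sum => s _; rewrite expect1_at_energy mulrBr lerD2l lerN2.
by apply: ler_wpM2r; [exact: slope_ge0 | exact: pi_min_le].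
Qed.

Lemma sum_norm_le_slope (z : state) :
  ws * \sum_s `|(z s)%:~R : R| <= 4 * \sum_s `|imb_slope z s|.
Proof.
have energy_le : ws * (\sum_s `|(z s)%:~R : R|) ^+ 2
    <= 4 * ((\sum_s `|(z s)%:~R : R|) * \sum_s `|imb_slope z s|).
  apply: le_trans (ler_wpM2l (ltW ws_gt0) (sqr_sum_norm_le (fun s => (z s)%:~R))) _.
  rewrite mulrCA ler_wpM2l //; apply: le_trans (imb_energy_ge z) _.
  by rewrite imb_energyE sum_mul_le_sum_norm.
move: energy_le; set S := \sum_s `|_|; set X := \sum_s `|_| => energy_le.
have S_ge0 : 0 <= S by apply: sumr_ge0.
have [->|S_neq0] := eqVneq S 0; first by rewrite mulr0 mulr_ge0 ?sumr_ge0.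
have S_gt0 : 0 < S by rewrite lt_neqAle eq_sym S_neq0.
by rewrite -(ler_pM2l S_gt0); move: energy_le; rewrite expr2; lra.
Qed.

Definition geom_rate : R := pi_min * (1 - p) / 2.

Lemma geom_rate_gt0 : 0 < geom_rate.
Proof. by rewrite divr_gt0 ?mulr_gt0 ?pi_min_gt0. Qed.

Lemma geom_rate_le1 : geom_rate <= 1.
Proof.
have q_le1 : 1 - p <= 1 by move: q_lt_p q_gt0; lra.
have := ler_pM (ltW pi_min_gt0) (ltW q_gt0) pi_min_le1 q_le1.
by rewrite /geom_rate ler_pdivrMr // !mul1r => /le_trans; apply; rewrite ler1n.
Qed.

(* Some move of the chain brings it one step closer to [y] in the l1 distance. *)
Lemma expect1_geom_ge z y : z != y ->
  2 * geom_rate ^+ l1dist z y <= expect1 z (fun w => geom_rate ^+ l1dist w y).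
Proof.
have geom_ge0 w : 0 <= geom_rate ^+ l1dist w y by rewrite exprn_ge0 ?ltW ?geom_rate_gt0.
move=> /l1dist_step [s [t t1 <-]].
apply: le_trans _ (expect1_ge_step z _ s t t1 geom_ge0).
rewrite exprS mulrA ler_wpM2r //.
by rewrite /geom_rate mulrC divfK ?pnatr_eq0 // ler_wpM2r ?pi_min_le // ltW.
Qed.

(* Beyond this l1 distance from [y] the energy alone has drift at most [-1]. *)
Definition near_radius (y : state) : nat :=
  (Num.truncn (8 / (drift_rate * ws) + \sum_s `|(y s)%:~R : R|)).+1.

Lemma l1dist_lt_near_radius z y :
  drift_rate * \sum_s `|imb_slope z s| < 2 -> (l1dist z y < near_radius y)%N.
Proof.
move=> near; rewrite -(ltr_nat R); apply: le_lt_trans (truncnS_gt _).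
apply: le_trans (l1dist_le z y) _.
rewrite lerD2r ler_pdivlMr ?(mulr_gt0 drift_rate_gt0 ws_gt0) //.
by have := ler_wpM2l (ltW drift_rate_gt0) (sum_norm_le_slope z); move: near; lra.
Qed.

Definition lyap (y w : state) : R :=
  imb_energy w + 2 / geom_rate ^+ near_radius y * (1 - geom_rate ^+ l1dist w y).

Lemma lyap_ge0 y w : 0 <= lyap y w.
Proof.
have geom_ge0 := ltW geom_rate_gt0.
rewrite addr_ge0 ?imb_energy_ge0 //; apply: mulr_ge0; first by rewrite divr_ge0 ?exprn_ge0.
by rewrite subr_ge0 exprn_ile1 ?geom_rate_le1.
Qed.

Lemma lyap_drift y z : z != y -> 1 + expect1 z (lyap y) <= lyap y z.
Proof.
move=> nzy; rewrite /lyap expect1D expect1Z expect1B expect1_cst.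
have geom_ge := expect1_geom_ge z y nzy; have energy_le := expect1_energy_le z.
set B := 2 / _; set Et := expect1 z _ in geom_ge *; set tz := geom_rate ^+ _ in geom_ge *.
have geom_ge0 := ltW geom_rate_gt0.
have B_ge0 : 0 <= B by rewrite divr_ge0 ?exprn_ge0.
have tz_ge0 : 0 <= tz by rewrite exprn_ge0.
have BE : B * (2 * tz) <= B * Et by rewrite ler_wpM2l.
have X_ge0 : 0 <= drift_rate * \sum_s `|imb_slope z s|.
  by apply: mulr_ge0; [exact: ltW drift_rate_gt0 | apply: sumr_ge0].
have [far|/(l1dist_lt_near_radius z y) near] := lerP 2 (drift_rate * \sum_s `|imb_slope z s|).
  by have := mulr_ge0 B_ge0 tz_ge0; move: BE far energy_le; rewrite !mulrBr; lra.
have Btz : 2 <= B * tz.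
  rewrite /B mulrAC ler_pdivlMr ?exprn_gt0 ?geom_rate_gt0 // ler_wpM2l //.
  by rewrite ler_wiXn2l ?geom_rate_le1 ?geom_rate_gt0 // ltnW.
by move: BE Btz X_ge0 energy_le; rewrite !mulrBr; lra.
Qed.

Lemma positive_recurrent_chain y : positive_recurrent wo wm1 wm2 ws p pi y.
Proof. exact: (positive_recurrent_of_drift y (lyap y) (lyap_ge0 y) (lyap_drift y)). Qed.

End Chain.

Theorem theorem1 (R : realType) (wo wm1 wm2 ws p : R) (pi : stratum -> R) :
  0 <= wo -> 0 <= wm1 -> 0 <= wm2 -> 0 <= ws ->
  wo + wm1 + wm2 + ws = 1 ->
  (* 0 < q < p < 1 with q = 1 - p *)
  0 < 1 - p -> 1 - p < p -> p < 1 ->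
  (* stratum probabilities of the i.i.d. multinomial covariate profiles *)
  (forall s, 0 < pi s) -> \sum_(s : stratum) pi s = 1 ->
  (* condition (A) *)
  0 < ws ->
  (* condition (B) *)
  (let u1 := wo + wm1 + wm2 + ws in
   let u2 := wo + wm1 in
   let u3 := wo + wm2 in
   let u4 := wo in
   forall x1 x2 x3 : R,
     u1 * x1 + u2 * x2 + u3 * x3 = u4 ->
     u2 * x1 + u1 * x2 + u4 * x3 = u3 ->
     u3 * x1 + u4 * x2 + u1 * x3 = u2 ->
     `|x1| + `|x2| + `|x3| < 1) ->
  pos_rec_chain_period wo wm1 wm2 ws p pi 2.
Proof.
move=> wo_ge0 wm1_ge0 wm2_ge0 _ w_sum1 q_gt0 q_lt_p _ pi_gt0 pi_sum1 ws_gt0 _.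
split; first exact: irreducible_chain.
split=> x; [exact: positive_recurrent_chain | exact: period2_chain].
Qed.
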